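(* For $[0,1]$ valuation functions, there is an absolute constant $c>0$ such that for every $n\ge1$, random priority on $n$ agents and $n$ items satisfies $ar(RP)\ge c/\sqrt n$.
   Context: Agents $N=\{1,\dots,n\}$, items $M=\{1,\dots,n\}$, outcomes are bijections $\mu$ ($O$ the set of outcomes). A $[0,1]$ valuation function is an injective $u_i:M\to[0,1]$ with $\max_j u_i(j)=1$ (the minimum need not be $0$); $V^n$ is the set of profiles of such functions. Random priority (RP) picks a uniformly random ordering of the agents and in that order gives each agent its most preferred still-unassigned item. $ar(J)=\inf_{\mathbf u\in V^n}\mathbb E[\sum_i u_i(J(\mathbf u)_i)]/\max_{\mu\in O}\sum_i u_i(\mu_i)$. *)

From mathcomp Require Import all_boot all_fingroup.
From Stdlib Require Import Reals.
Set Implicit Arguments. Unset Strict Implicit. Unset Printing Implicit Defensive.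

Definition leRb (x y : R) : bool := if Rle_dec x y then true else false.

(* A profile of [0,1] valuation functions for n agents over n items:
   u i j = value of agent i for item j. *)
Definition valuation01 (n : nat) (ui : 'I_n -> R) : Prop :=
  injective ui /\ (forall j, (0 <= ui j <= 1)%R) /\
  (exists j, ui j = 1%R).

Definition profile01 (n : nat) (u : 'I_n -> 'I_n -> R) : Prop :=
  forall i, valuation01 (u i).

Definition welfare (n : nat) (u : 'I_n -> 'I_n -> R) (mu : 'S_n) : R :=
  \big[Rplus/0%R]_(i : 'I_n) u i (mu i).

(* Optimal welfare: max over all bijections (welfare is >= 0, so 0 is a
   neutral starting value; the set of outcomes is nonempty). *)
Definition opt_welfare (n : nat) (u : 'I_n -> 'I_n -> R) : R :=
  \big[Rmax/0%R]_(mu : 'S_n) welfare u mu.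

(* Each agent takes its most preferred available item
   (unique by injectivity of the valuation). *)
Fixpoint serial_dictatorship (n : nat) (u : 'I_n -> 'I_n -> R)
    (s : seq 'I_n) (avail : {set 'I_n}) : seq ('I_n * 'I_n) :=
  match s with
  | [::] => [::]
  | i :: s' =>
      match [pick j in avail | [forall k in avail, leRb (u i k) (u i j)]] with
      | Some j => (i, j) :: serial_dictatorship u s' (avail :\ j)
      | None => serial_dictatorship u s' avail
      end
  end.

(* Welfare of the matching produced by serial dictatorship with ordering
   pi (pi k = agent in position k). *)
Definition sd_welfare (n : nat) (u : 'I_n -> 'I_n -> R) (pi : 'S_n) : R :=
  \big[Rplus/0%R]_(p <- serial_dictatorship u [seq pi k | k <- enum 'I_n] setT)
     u p.1 p.2.

Definition RP_welfare (n : nat) (u : 'I_n -> 'I_n -> R) : R :=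
  (/ INR (n`!) * \big[Rplus/0%R]_(pi : 'S_n) sd_welfare u pi)%R.

From mathcomp Require Import all_boot all_fingroup.
From Stdlib Require Import Reals Lra Lia.
From HB Require Import structures.
Set Implicit Arguments. Unset Strict Implicit. Unset Printing Implicit Defensive.

(** Fix an optimal matching [mu] with welfare [W] and run serial dictatorship
    along a uniformly random order.  An agent [k] whose optimal item [mu k] is
    still free when it picks gets at least [u k (mu k)].  The potential after
    [t] picks is the optimal value of the agents still waiting whose optimal
    item is still free; each pick lowers it by at most the picker's own such
    gain plus [1] (the one waiting agent whose optimal item was taken).  By
    symmetry of the random order, the expected potential after [t] picks is
    [n - t] times the expected gain of the [t+1]-st picker.  Running [T] picks
    this yields [T (W - r - T) <= n r] for the expected welfare [r] of random
    priority, and with [r >= 1] and [T = floor (sqrt n)] we get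
    [r / W >= 1 / (6 sqrt n)]. *)

Lemma Rplus_associative : associative Rplus.
Proof. by move=> x y z; rewrite Rplus_assoc. Qed.

HB.instance Definition _ :=
  Monoid.isComLaw.Build R 0%R Rplus Rplus_associative Rplus_comm Rplus_0_l.

Lemma leRbP x y : reflect (x <= y)%R (leRb x y).
Proof. by rewrite /leRb; case: Rle_dec => h; constructor. Qed.

Section RealSums.

Variables (I : Type) (r : seq I) (P : pred I).

Lemma rsum_le (F G : I -> R) : (forall i, P i -> (F i <= G i)%R) ->
  (\big[Rplus/0%R]_(i <- r | P i) F i <= \big[Rplus/0%R]_(i <- r | P i) G i)%R.
Proof.
move=> FG; apply: (big_ind2 (fun x y => (x <= y)%R)) => //; first lra.
by move=> *; lra.
Qed.

Lemma rsum_ge0 (F : I -> R) : (forall i, P i -> (0 <= F i)%R) ->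
  (0 <= \big[Rplus/0%R]_(i <- r | P i) F i)%R.
Proof.
move=> F0; apply: (big_ind (fun x => (0 <= x)%R)) => //; first lra.
by move=> *; lra.
Qed.

Lemma rsum_scale (F : I -> R) c :
  \big[Rplus/0%R]_(i <- r | P i) (c * F i)%R
  = (c * \big[Rplus/0%R]_(i <- r | P i) F i)%R.
Proof.
apply: (big_ind2 (fun x y => x = c * y)%R) => //; first lra.
by move=> x1 x2 y1 y2 -> ->; lra.
Qed.

Lemma iter_Rplus k c : iter k (Rplus c) 0%R = (INR k * c)%R.
Proof. by elim: k => [|k IH]; rewrite ?[iter _ _ _]/= ?IH ?S_INR /=; lra. Qed.

Lemma rsum_const_seq c : \big[Rplus/0%R]_(i <- r) c = (INR (size r) * c)%R.
Proof. by rewrite big_const_seq count_predT iter_Rplus. Qed.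

End RealSums.

Lemma rsum_const_fin (I : finType) c :
  \big[Rplus/0%R]_(i : I) c = (INR #|I| * c)%R.
Proof. by rewrite big_const iter_Rplus. Qed.

Lemma rsum_indicator_uniq_le1 (T : eqType) (r : seq T) k0 : uniq r ->
  (\big[Rplus/0%R]_(k <- r) (if k == k0 then 1 else 0) <= 1)%R.
Proof.
elim: r => [|y r IH] /=; first by rewrite big_nil; lra.
case/andP=> yr ur; rewrite big_cons; case: eqP => [yk | _]; last by have := IH ur; lra.
rewrite big1_seq; first lra.
by move=> k /andP [_ kr]; case: eqP => // ek; rewrite yk -ek kr in yr.
Qed.

Lemma bigRmax_ub (T : eqType) (r : seq T) (F : T -> R) i :
  i \in r -> (F i <= \big[Rmax/0%R]_(j <- r) F j)%R.
Proof.
elim: r => [//|x r IH]; rewrite inE big_cons => /orP [/eqP -> | /IH ir].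
  exact: Rmax_l.
exact: Rle_trans ir (Rmax_r _ _).
Qed.

Lemma bigRmax_eq0_or_attained (T : eqType) (r : seq T) (F : T -> R) :
  \big[Rmax/0%R]_(j <- r) F j = 0%R \/
  exists2 i, i \in r & \big[Rmax/0%R]_(j <- r) F j = F i.
Proof.
elim: r => [|x r IH]; first by left; rewrite big_nil.
rewrite big_cons /Rmax; case: Rle_dec => _; last by right; exists x; rewrite ?mem_head.
case: IH => [-> | [i ir ->]]; first by left.
by right; exists i; rewrite // inE ir orbT.
Qed.

Lemma seq_argmax (T : eqType) (f : T -> R) (s : seq T) x : x \in s ->
  exists2 j, j \in s & forall k, k \in s -> (f k <= f j)%R.
Proof.
elim: s x => [//|y s IH] x _.
case: s IH => [|z s] IH.
  by exists y; rewrite ?mem_head // => k; rewrite inE => /eqP ->; lra.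
have [j js jmax] := IH z (mem_head _ _).
case: (Rle_dec (f y) (f j)) => fyj.
  exists j; first by rewrite inE js orbT.
  by move=> k; rewrite inE => /orP [/eqP -> | /jmax].
exists y; rewrite ?mem_head // => k; rewrite inE => /orP [/eqP -> | /jmax]; lra.
Qed.

Lemma take_enum_ord_lt n t (y : 'I_n) : y \in take t (enum 'I_n) -> y < t.
Proof.
move=> /(map_f val); rewrite map_take val_enum_ord take_iota mem_iota add0n.
by rewrite leq_min => /andP [_ /andP []].
Qed.

Lemma drop_enum_ord_ge n t (y : 'I_n) : y \in drop t (enum 'I_n) -> t <= y.
Proof.
by move=> /(map_f val); rewrite map_drop val_enum_ord drop_iota mem_iota add0n => /andP [].
Qed.

Lemma profile01_bounds n (u : 'I_n -> 'I_n -> R) : profile01 u ->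
  forall i j, (0 <= u i j <= 1)%R.
Proof. by move=> hu i j; case: (hu i) => _ []. Qed.

Section SerialDictatorship.

Variables (n : nat) (u : 'I_n -> 'I_n -> R).
Hypothesis hu : profile01 u.

Definition favourite i (A : {set 'I_n}) :=
  [pick j in A | [forall k in A, leRb (u i k) (u i j)]].

Definition after_pick i A := if favourite i A is Some j then A :\ j else A.

Fixpoint avail_after (s : seq 'I_n) A :=
  if s is i :: s' then avail_after s' (after_pick i A) else A.

Definition sd_sum s A :=
  \big[Rplus/0%R]_(p <- serial_dictatorship u s A) u p.1 p.2.

Lemma favourite_max i (A : {set 'I_n}) x : x \in A ->
  exists j, [/\ favourite i A = Some j, j \in A & (u i x <= u i j)%R].
Proof.
move=> xA; rewrite /favourite; case: pickP => [j /andP [jA /forall_inP jmax] | none].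
  by exists j; split=> //; apply/leRbP/jmax.
have xA' : x \in enum A by rewrite mem_enum.
have [j jA jmax] := seq_argmax (u i) xA'.
move: (none j); rewrite -mem_enum jA /= => /negP []; apply/forall_inP => k kA.
by apply/leRbP/jmax; rewrite mem_enum.
Qed.

Lemma sd_sum_cons i s A :
  sd_sum (i :: s) A =
  if favourite i A is Some j then (u i j + sd_sum s (A :\ j))%R else sd_sum s A.
Proof. by rewrite /sd_sum /= -/(favourite i A); case: favourite => [j|]; rewrite ?big_cons. Qed.

Lemma sd_sum_ge0 s A : (0 <= sd_sum s A)%R.
Proof. by apply: rsum_ge0 => p _; have := profile01_bounds hu p.1 p.2; lra. Qed.

Lemma sd_sum_ge1 i s : (1 <= sd_sum (i :: s) setT)%R.
Proof.
rewrite sd_sum_cons; case: (hu i) => _ [_ [j1 uj1]].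
have [j [-> _ j1j]] := favourite_max i (in_setT j1).
by have := sd_sum_ge0 s (setT :\ j); lra.
Qed.

Lemma avail_after_rcons s i A :
  avail_after (rcons s i) A = after_pick i (avail_after s A).
Proof. by elim: s A => [|x s IH] A //=. Qed.

Variable mu : 'S_n.

(* What agent [i] is guaranteed when it picks from [A]. *)
Definition opt_gain i (A : {set 'I_n}) := if mu i \in A then u i (mu i) else 0%R.

Fixpoint opt_gains s A :=
  if s is i :: s' then (opt_gain i A + opt_gains s' (after_pick i A))%R else 0%R.

Definition potential s A t :=
  \big[Rplus/0%R]_(k <- drop t s) opt_gain k (avail_after (take t s) A).

Lemma opt_gain_ge0 k A : (0 <= opt_gain k A)%R.
Proof. by rewrite /opt_gain; case: ifP => _; [case: (profile01_bounds hu k (mu k)) | lra]. Qed.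

Lemma opt_gains_le_sd_sum s A : (opt_gains s A <= sd_sum s A)%R.
Proof.
elim: s A => [|i s IH] A; first by rewrite /sd_sum big_nil /=; lra.
rewrite sd_sum_cons /= /after_pick /opt_gain; case: ifP => muA.
  by have [j [-> _ uj]] := favourite_max i muA; have := IH (A :\ j); lra.
case: favourite => [j|]; last by have := IH A; lra.
by have := IH (A :\ j); have := profile01_bounds hu i j; lra.
Qed.

Lemma opt_gain_setD1 k B j :
  (opt_gain k (B :\ j) <= opt_gain k B <=
   opt_gain k (B :\ j) + (if k == (mu^-1)%g j then 1 else 0))%R.
Proof.
have := profile01_bounds hu k (mu k); rewrite /opt_gain in_setD1.
case: (boolP (mu k \in B)) => muB; rewrite ?andbF ?andbT; last by case: ifP; lra.
case: eqP => [<- | ne] /=; first by rewrite permK eqxx; lra.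
by case: eqP => [e|_]; [case: ne; rewrite e permKV | lra].
Qed.

(* A pick removes a single item, hence destroys the optimal gain of at most
   one agent. *)
Lemma rsum_opt_gain_after_pick (r : seq 'I_n) i B : uniq r ->
  (\big[Rplus/0%R]_(k <- r) opt_gain k (after_pick i B) <=
   \big[Rplus/0%R]_(k <- r) opt_gain k B <=
   \big[Rplus/0%R]_(k <- r) opt_gain k (after_pick i B) + 1)%R.
Proof.
move=> ur; rewrite /after_pick; case: favourite => [j|]; last lra.
split; first by apply: rsum_le => k _; case: (opt_gain_setD1 k B j).
apply: Rle_trans (_ : _ <= \big[Rplus/0%R]_(k <- r)
   (opt_gain k (B :\ j) + (if k == (mu^-1)%g j then 1 else 0))%R)%R _.
  by apply: rsum_le => k _; case: (opt_gain_setD1 k B j).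
by rewrite big_split /=; apply: Rplus_le_compat_l; apply: rsum_indicator_uniq_le1.
Qed.

Lemma potential0 s A : potential s A 0 = \big[Rplus/0%R]_(k <- s) opt_gain k A.
Proof. by rewrite /potential drop0 take0. Qed.

Lemma potential_succ_le s A t : uniq s -> t < size s ->
  (potential s A t.+1 <= potential s A t)%R.
Proof.
move=> us ts; have i : 'I_n by move: ts; case: s {us} => [//|i _] _; exact: i.
rewrite /potential (drop_nth i ts) (take_nth i ts) avail_after_rcons big_cons.
have [h _] := rsum_opt_gain_after_pick (nth i s t)
  (avail_after (take t s) A) (drop_uniq t.+1 us).
apply: Rle_trans h _; rewrite -[X in (X <= _)%R]Rplus_0_l.
by apply: Rplus_le_compat; [apply: opt_gain_ge0 | apply: Rle_refl].
Qed.

Lemma potential_nonincreasing s A t T : uniq s -> t <= T -> T <= size s ->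
  (potential s A T <= potential s A t)%R.
Proof.
move=> us; elim: T => [|T IH]; first by rewrite leqn0 => /eqP ->; lra.
rewrite leq_eqVlt => /orP [/eqP -> _ | tT Ts]; first lra.
by have := potential_succ_le A us Ts; have := IH tT (ltnW Ts); lra.
Qed.

Variable i0 : 'I_n.

Definition step_gain s A t := opt_gain (nth i0 s t) (avail_after (take t s) A).

Lemma opt_gains_nth s A :
  opt_gains s A = \big[Rplus/0%R]_(0 <= t < size s) step_gain s A t.
Proof.
elim: s A => [|i s IH] A; first by rewrite big_nil.
by rewrite /= big_nat_recl // IH.
Qed.

Lemma potential_succ_ge s A t : uniq s -> t < size s ->
  (potential s A t - step_gain s A t - 1 <= potential s A t.+1)%R.
Proof.
move=> us ts; rewrite /potential /step_gain (drop_nth i0 ts) (take_nth i0 ts).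
rewrite avail_after_rcons big_cons.
have ud : uniq (drop t.+1 s) by apply: drop_uniq.
have [_ h] := rsum_opt_gain_after_pick (nth i0 s t) (avail_after (take t s) A) ud.
have cancel_gain (g S S' : R) : (S <= S' + 1 -> g + S - g - 1 <= S')%R by lra.
exact: cancel_gain h.
Qed.

Lemma potential_lower_bound s A t : uniq s -> t <= size s ->
  (\big[Rplus/0%R]_(k <- s) opt_gain k A
     - \big[Rplus/0%R]_(0 <= k < t) step_gain s A k - INR t
   <= potential s A t)%R.
Proof.
move=> us; elim: t => [|t IH] ts; first by rewrite big_geq // potential0 /=; lra.
have := potential_succ_ge A us ts; have := IH (ltnW ts).
by rewrite S_INR big_nat_recr //=; lra.
Qed.

Lemma step_gains_le_sd_sum s A :
  (\big[Rplus/0%R]_(0 <= t < size s) step_gain s A t <= sd_sum s A)%R.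
Proof. by rewrite -opt_gains_nth; apply: opt_gains_le_sd_sum. Qed.

End SerialDictatorship.

Section RandomPriority.

Variables (n : nat) (u : 'I_n -> 'I_n -> R) (mu : 'S_n).
Hypothesis hu : profile01 u.

Definition order_seq (s : 'S_n) := [seq s k | k <- enum 'I_n].

Lemma order_seq_uniq s : uniq (order_seq s).
Proof. by rewrite map_inj_uniq ?enum_uniq //; apply: perm_inj. Qed.

Lemma size_order_seq s : size (order_seq s) = n.
Proof. by rewrite size_map size_enum_ord. Qed.

Lemma take_order_seq s t : take t (order_seq s) = map s (take t (enum 'I_n)).
Proof. by rewrite map_take. Qed.

Lemma sd_welfare_ge1 s : 0 < n -> (1 <= sd_welfare u s)%R.
Proof.
move=> n0; rewrite /sd_welfare -/(order_seq s) -/(sd_sum u _ _).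
have := size_order_seq s; case: (order_seq s) => [n_eq0 | i r _]; last exact: sd_sum_ge1.
by rewrite -n_eq0 in n0.
Qed.

Lemma RP_welfare_ge1 : 0 < n -> (1 <= RP_welfare u)%R.
Proof.
move=> n0; have N0 : (0 < INR n`!)%R by apply/lt_0_INR/ltP/fact_gt0.
have := @rsum_le _ (index_enum {perm 'I_n}) predT _ _ (fun s _ => sd_welfare_ge1 s n0).
rewrite rsum_const_fin card_Sn Rmult_1_r /RP_welfare => sum_ge.
apply: (Rmult_le_reg_l (INR n`!)) => //.
by rewrite -Rmult_assoc Rinv_r ?Rmult_1_l ?Rmult_1_r //; apply: Rgt_not_eq.
Qed.

Lemma potential_order_seq0 s : potential u mu (order_seq s) setT 0 = welfare u mu.
Proof.
rewrite potential0 /welfare /order_seq big_map big_enum /=.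
rewrite [RHS](reindex_inj (@perm_inj _ s)) /=.
by apply: eq_big => [k | k _]; rewrite ?inE // /opt_gain in_setT.
Qed.

(* Transposing positions [t] and [x >= t] of the order is a bijection of
   ['S_n] that leaves the first [t] picks unchanged. *)
Lemma sum_step_gain_potential (i0 : 'I_n) t : t < n ->
  (INR (n - t) * \big[Rplus/0%R]_(s : 'S_n) step_gain u mu i0 (order_seq s) setT t
   = \big[Rplus/0%R]_(s : 'S_n) potential u mu (order_seq s) setT t)%R.
Proof.
move=> tn; set E := enum 'I_n.
have tE : t < size E by rewrite size_enum_ord.
set t0 := nth i0 E t.
have t0_t : (t0 : nat) = t by rewrite /t0 /E nth_enum_ord.
set Av := fun s : 'S_n => avail_after u (take t (order_seq s)) setT.
have step_gainE s : step_gain u mu i0 (order_seq s) setT t = opt_gain u mu (s t0) (Av s).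
  by rewrite /step_gain /order_seq (nth_map i0).
have potentialE s : potential u mu (order_seq s) setT t =
    \big[Rplus/0%R]_(x <- drop t E) opt_gain u mu (s x) (Av s).
  by rewrite /potential /order_seq -map_drop big_map.
rewrite (eq_bigr _ (fun s _ => step_gainE s)) (eq_bigr _ (fun s _ => potentialE s)).
rewrite exchange_big /= [RHS](eq_big_seq
  (fun _ => \big[Rplus/0%R]_(s : 'S_n) opt_gain u mu (s t0) (Av s))).
  by rewrite rsum_const_seq size_drop size_enum_ord.
move=> x xt; rewrite [RHS](reindex_inj (mulgI (tperm t0 x))) /=.
apply: eq_bigr => s _; rewrite permM tpermL; congr opt_gain.
rewrite /Av !take_order_seq; congr (avail_after u _ _).
apply/eq_in_map => y yt; have {}yt := take_enum_ord_lt yt; rewrite permM tpermD //.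
  by apply/eqP => t0_y; rewrite -t0_y t0_t ltnn in yt.
apply/eqP => x_y; have := drop_enum_ord_ge xt.
by rewrite x_y leqNgt yt.
Qed.

Variable i0 : 'I_n.

Definition total_gain t :=
  \big[Rplus/0%R]_(s : 'S_n) step_gain u mu i0 (order_seq s) setT t.

Definition total_potential t :=
  \big[Rplus/0%R]_(s : 'S_n) potential u mu (order_seq s) setT t.

Lemma total_gain_ge0 t : (0 <= total_gain t)%R.
Proof. by apply: rsum_ge0 => s _; apply: opt_gain_ge0. Qed.

Lemma sum_total_gain_le T : T <= n ->
  (\big[Rplus/0%R]_(0 <= t < T) total_gain t
   <= \big[Rplus/0%R]_(s : 'S_n) sd_welfare u s)%R.
Proof.
move=> Tn; rewrite exchange_big /=; apply: rsum_le => s _.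
apply: Rle_trans (step_gains_le_sd_sum hu mu i0 (order_seq s) setT).
rewrite size_order_seq [X in (_ <= X)%R](big_cat_nat _ (n := T)) //=.
rewrite -[X in (X <= _)%R]Rplus_0_r.
by apply: Rplus_le_compat_l; apply: rsum_ge0 => t _; apply: opt_gain_ge0.
Qed.

Lemma total_potential_lower_bound T : T <= n ->
  (INR n`! * welfare u mu
   <= total_potential T + \big[Rplus/0%R]_(0 <= t < T) total_gain t + INR n`! * INR T)%R.
Proof.
move=> Tn.
have bound s : (welfare u mu <= potential u mu (order_seq s) setT T
    + \big[Rplus/0%R]_(0 <= t < T) step_gain u mu i0 (order_seq s) setT t + INR T)%R.
  have := potential_lower_bound hu mu i0 setT (order_seq_uniq s).
  rewrite -potential0 potential_order_seq0 size_order_seq => /(_ T Tn); lra.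
have := @rsum_le _ (index_enum {perm 'I_n}) predT _ _ (fun s _ => bound s).
by rewrite !big_split /= !rsum_const_fin card_Sn exchange_big.
Qed.

Lemma total_potential_le_total_gain t T : t < T -> T <= n ->
  (total_potential T <= INR n * total_gain t)%R.
Proof.
move=> tT Tn; have tn := leq_trans tT Tn.
apply: (@Rle_trans _ (total_potential t)).
  apply: rsum_le => s _; apply: potential_nonincreasing (order_seq_uniq s) _ _ => //.
    exact: ltnW.
  by rewrite size_order_seq.
rewrite /total_potential -(sum_step_gain_potential i0 tn) -/(total_gain t).
apply: Rmult_le_compat_r; first exact: total_gain_ge0.
by apply/le_INR/leP; apply: leq_subr.
Qed.

Lemma total_potential_le_sum_total_gain T : T <= n ->
  (INR T * total_potential T <= INR n * \big[Rplus/0%R]_(0 <= t < T) total_gain t)%R.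
Proof.
move=> Tn; rewrite -rsum_scale.
have -> : (INR T * total_potential T = \big[Rplus/0%R]_(0 <= t < T) total_potential T)%R.
  by rewrite rsum_const_seq size_iota subn0.
rewrite big_seq [X in (_ <= X)%R]big_seq; apply: rsum_le => t.
by rewrite mem_index_iota => /andP [_ tT]; apply: total_potential_le_total_gain.
Qed.

End RandomPriority.

Lemma RP_welfare_tradeoff n (u : 'I_n -> 'I_n -> R) (mu : 'S_n) T :
  profile01 u -> 0 < n -> T <= n ->
  (INR T * (welfare u mu - RP_welfare u - INR T) <= INR n * RP_welfare u)%R.
Proof.
move=> hu n0 Tn; pose i0 := Ordinal n0.
have N0 : (0 < INR n`!)%R by apply/lt_0_INR/ltP/fact_gt0.
have G_le : (\big[Rplus/0%R]_(0 <= t < T) total_gain u mu i0 t <= INR n`! * RP_welfare u)%R.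
  rewrite /RP_welfare -Rmult_assoc Rinv_r ?Rmult_1_l; last exact: Rgt_not_eq.
  exact: sum_total_gain_le.
have W_le := total_potential_lower_bound mu hu i0 Tn.
have P_le := total_potential_le_sum_total_gain mu hu i0 Tn.
have T0 := pos_INR T; have n_ge0 := pos_INR n.
apply: (Rmult_le_reg_l (INR n`!)) => //; nra.
Qed.

Lemma welfare_ge1 n (u : 'I_n -> 'I_n -> R) (i0 : 'I_n) : profile01 u ->
  exists nu : 'S_n, (1 <= welfare u nu)%R.
Proof.
move=> hu; case: (hu i0) => _ [_ [j1 uj1]].
exists (tperm i0 j1); rewrite /welfare (bigD1 i0) //= tpermL uj1.
rewrite -{1}(Rplus_0_r 1); apply: Rplus_le_compat; first lra.
by apply: rsum_ge0 => i _; case: (profile01_bounds hu i (tperm i0 j1 i)).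
Qed.

Lemma opt_welfare_ge1 n (u : 'I_n -> 'I_n -> R) : 0 < n -> profile01 u ->
  (1 <= opt_welfare u)%R.
Proof.
move=> n0 hu; have [nu nu1] := welfare_ge1 (Ordinal n0) hu.
by apply: Rle_trans nu1 _; apply: bigRmax_ub; rewrite mem_index_enum.
Qed.

Lemma opt_welfare_attained n (u : 'I_n -> 'I_n -> R) : 0 < n -> profile01 u ->
  exists mu : 'S_n, opt_welfare u = welfare u mu.
Proof.
move=> n0 hu; have := opt_welfare_ge1 n0 hu; rewrite /opt_welfare.
by case: (bigRmax_eq0_or_attained (index_enum {perm 'I_n}) (welfare u)) => [-> | [mu _ ->]]; [lra | exists mu].
Qed.

Local Open Scope R_scope.

(* With [T = floor (sqrt n)]: if [W > 6 r sqrt n] then [W - r - T >= W / 3],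
   contradicting [T (W - r - T) <= n r]. *)
Lemma ratio_lower_bound (n T W r : R) : 1 <= T -> T * T <= n -> n < (T + 1) * (T + 1) ->
  1 <= r -> T * (W - r - T) <= n * r -> 0 < W -> 1 / 6 / sqrt n <= r / W.
Proof.
move=> T1 TTn nTT r1 tradeoff W0.
have n0 : 0 <= n by nra.
set s := sqrt n.
have ss : s * s = n by apply: sqrt_sqrt.
have s0 : 0 <= s by apply: sqrt_pos.
have Ts : T <= s by case: (Rle_dec T s) => // /Rnot_le_lt; nra.
have sT : s < T + 1 by case: (Rlt_dec s (T + 1)) => // /Rnot_lt_le; nra.
have W_le : W <= 6 * r * s.
  case: (Rle_dec W (3 * s)) => [|W3s]; first nra.
  case: (Rle_dec (W / 3) r) => [|W3r]; first nra.
  have h1 : T * (W / 3) <= s * s * r.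
    by rewrite ss; apply: Rle_trans tradeoff; apply: Rmult_le_compat_l; lra.
  have h2 : s * (W / 6) <= s * (s * r) by nra.
  suff : W / 6 <= s * r by lra.
  by apply: (Rmult_le_reg_l s) => //; lra.
apply: (Rmult_le_reg_r (6 * s * W)); first nra.
have -> : 1 / 6 / s * (6 * s * W) = W by field; lra.
have -> : r / W * (6 * s * W) = 6 * r * s by field; lra.
lra.
Qed.

Close Scope R_scope.

Theorem corollary1 :
  exists c : R, (0 < c)%R /\
    forall n : nat, (1 <= n)%N ->
      forall u : 'I_n -> 'I_n -> R, profile01 u ->
        (c / sqrt (INR n) <= RP_welfare u / opt_welfare u)%R.
Proof.
exists (1 / 6)%R; split; first lra.
move=> n n0 u hu.
have [mu opt_mu] := opt_welfare_attained n0 hu.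
have opt1 := opt_welfare_ge1 n0 hu.
pose T := Nat.sqrt n; have [TTn nTT] := Nat.sqrt_spec' n.
have Tn : (T <= n)%N by apply/leP; rewrite -/T in TTn; nia.
have T1 : (1 <= T)%N by apply/leP; move/leP: n0; rewrite -/T in nTT; nia.
apply: (@ratio_lower_bound _ (INR T)).
- by apply: (le_INR 1); apply/leP.
- by rewrite -mult_INR; apply: le_INR.
- by rewrite -S_INR -mult_INR; apply: lt_INR.
- exact: RP_welfare_ge1.
- by rewrite opt_mu; apply: RP_welfare_tradeoff.
- lra.
Qed.
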